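(* Let $g$ be a probability density on $\mathbb{R}$ which is unimodal, symmetric about $0$, logconcave and positive on $\mathbb{R}$, and let $h=-\ln g$. If $h'$ is unbounded (i.e. $h'(x)\to\infty$ as $x\to\infty$), then for every $y>0$, $\lim_{x\to-\infty}\frac{\bar G(y-x)}{\bar G(-x)}=0$, and consequently the upper endpoint $u(x)$ of the HPD credible interval satisfies $u(x)\to0$ as $x\to-\infty$ (i.e. $a=0$).
   Context: $G$ is the cdf of $g$, $\bar G=1-G$, $G^{-1}$ its quantile function. For $X$ with density $g(x-\theta)$, $\theta\ge0$, and $\alpha\in(0,1)$, with $d_0=G^{-1}(\tfrac1{1+\alpha})$, the $100(1-\alpha)\%$ HPD Bayesian credible interval under the prior $1_{[0,\infty)}(\theta)$ has upper endpoint $u(x)=x-G^{-1}(\alpha G(x))$ for $x\le d_0$ and $u(x)=x+G^{-1}(\tfrac12+\tfrac{1-\alpha}2G(x))$ for $x>d_0$; $a=\lim_{x\to-\infty}u(x)$. The posterior of $\theta$ given $x$ has density $g(\theta-x)1_{[0,\infty)}(\theta)/G(x)$, so $P(\theta\ge y\mid x)=\bar G(y-x)/\bar G(-x)$ for $y\ge0$. *)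

From Stdlib Require Import Reals Lra ClassicalEpsilon.
Open Scope R_scope.

Definition lim_minfty (f : R -> R) (l : R) : Prop :=
  forall eps, 0 < eps -> exists X, forall x, x <= X -> Rabs (f x - l) < eps.

Definition lim_pinfty (f : R -> R) (l : R) : Prop :=
  forall eps, 0 < eps -> exists X, forall x, X <= x -> Rabs (f x - l) < eps.

Definition tends_pinfty (f : R -> R) : Prop :=
  forall M, exists X, forall x, X <= x -> M <= f x.

(* quantile function G^{-1}(p): a point q with G q = p (unique when G is a
   continuous strictly increasing cdf and 0 < p < 1). *)
Definition quantile (G : R -> R) (p : R) : R :=
  epsilon (inhabits 0) (fun q => G q = p).

Definition hpd_upper (G : R -> R) (alpha x : R) : R :=
  let d0 := quantile G (1 / (1 + alpha)) in
  if Rle_dec x d0 then x - quantile G (alpha * G x)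
  else x + quantile G (1/2 + (1 - alpha) / 2 * G x).

From Stdlib Require Import Reals Lra ClassicalEpsilon.
Open Scope R_scope.

(* Write h = -ln g.  Since h is convex, it lies above its tangent
   lines, so h'(s) >= M forces the density to decay geometrically to the right
   of s: g(s+y) <= exp(-M y) g(s).  Because h' -> +oo, for every c > 0 we get
   g(s+y) <= c g(s) for all large s; integrating this against the tail (via a
   monotonicity argument on 1 - G(t+y) - c (1 - G t)) gives
   1 - G(t+y) <= c (1 - G t) for large t, i.e. the posterior probability
   P(theta >= y | x) = (1-G(y-x))/(1-G(-x)) tends to 0 as x -> -oo.
   For the HPD endpoint: for x below d0 we have u(x) = x - q with
   G q = alpha G x, so 0 < u(x); by symmetry of G the ratio above equals
   G(x-eps)/G(x), and once it is below alpha monotonicity of G gives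
   x - eps < q, i.e. u(x) < eps. *)

Lemma derivable_pt_lim_shift (f : R -> R) (y x l : R) :
  derivable_pt_lim f (x + y) l -> derivable_pt_lim (fun t => f (t + y)) x l.
Proof.
  intros Hf.
  replace l with (l * (1 + 0)) by ring.
  apply (derivable_pt_lim_comp (fun t => t + y) f); [|exact Hf].
  apply (derivable_pt_lim_plus id (fct_cte y));
    [apply derivable_pt_lim_id | apply derivable_pt_lim_const].
Qed.

Lemma derivable_pt_lim_reflect (f : R -> R) (x l : R) :
  derivable_pt_lim f (- x) l -> derivable_pt_lim (fun t => f (- t)) x (- l).
Proof.
  intros Hf.
  replace (- l) with (l * - (1)) by ring.
  apply (derivable_pt_lim_comp (fun t => - t) f); [|exact Hf].
  apply (derivable_pt_lim_opp id), derivable_pt_lim_id.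
Qed.

Lemma nondecreasing_of_deriv_nonneg (f f' : R -> R) (T : R) :
  (forall x, derivable_pt_lim f x (f' x)) -> (forall x, T <= x -> 0 <= f' x) ->
  forall a b, T <= a -> a <= b -> f a <= f b.
Proof.
  intros Hf Hpos a b Ha [Hab | ->]; [|lra].
  destruct (MVT_cor2 f f' a b Hab) as [c [Hc Hac]]; [intros; apply Hf|].
  assert (0 <= f' c * (b - a)) by (apply Rmult_le_pos; [apply Hpos|]; lra).
  lra.
Qed.

Lemma constant_of_deriv_zero (f : R -> R) :
  (forall x, derivable_pt_lim f x 0) -> forall a b, f a = f b.
Proof.
  intros Hf.
  assert (Hmono : forall (s : R) a b, a <= b -> s * f a <= s * f b).
  { intros s a b Hab.
    apply (nondecreasing_of_deriv_nonneg (fun t => s * f t) (fun _ => 0) a);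
      [|intros; lra|lra|lra].
    intros x; replace 0 with (s * 0) by ring.
    apply (derivable_pt_lim_scal f), Hf. }
  intros a b; destruct (Rle_or_lt a b) as [H | H];
    [pose proof (Hmono 1 a b H); pose proof (Hmono (-1) a b H)
    |pose proof (Hmono 1 b a (Rlt_le _ _ H)); pose proof (Hmono (-1) b a (Rlt_le _ _ H))];
    lra.
Qed.

Lemma nondecreasing_eventually_small_nonpos (F : R -> R) (T : R) :
  (forall a b, T <= a -> a <= b -> F a <= F b) ->
  (forall eps, 0 < eps -> exists X, forall t, X <= t -> F t < eps) ->
  forall t, T <= t -> F t <= 0.
Proof.
  intros Hmono Hsmall t Ht.
  destruct (Rle_or_lt (F t) 0) as [H | H]; [exact H|].
  destruct (Hsmall (F t) H) as [X HX].
  pose proof (HX (Rmax X t) (Rmax_l _ _)).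
  pose proof (Hmono t (Rmax X t) Ht (Rmax_r _ _)).
  lra.
Qed.

Lemma derivative_le_of_quotients_le (f : R -> R) (s d y B : R) :
  derivable_pt_lim f s d -> 0 < y ->
  (forall k, 0 < k <= y -> (f (s + k) - f s) / k <= B) -> d <= B.
Proof.
  intros Hd Hy Hq.
  destruct (Rle_or_lt d B) as [H | H]; [exact H|].
  destruct (Hd (d - B)) as [delta Hdelta]; [lra|].
  pose proof (cond_pos delta) as Hdelta_pos.
  pose proof (Rmin_r y (delta / 2)) as Hk_half.
  set (k := Rmin y (delta / 2)) in *.
  assert (Hk : 0 < k <= y) by (split; [apply Rmin_glb_lt|apply Rmin_l]; lra).
  assert (Hk_delta : Rabs k < delta) by (rewrite Rabs_pos_eq; lra).
  specialize (Hdelta k ltac:(lra) Hk_delta).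
  apply Rabs_def2 in Hdelta.
  pose proof (Hq k Hk).
  lra.
Qed.

Lemma convex_above_tangent (f : R -> R) (s d y : R) :
  (forall a b t, 0 <= t <= 1 -> f (t * a + (1 - t) * b) <= t * f a + (1 - t) * f b) ->
  derivable_pt_lim f s d -> 0 < y -> d * y <= f (s + y) - f s.
Proof.
  intros Hconv Hd Hy.
  assert (Hq : d <= (f (s + y) - f s) / y).
  { apply (derivative_le_of_quotients_le f s d y); [exact Hd | exact Hy|].
    intros k Hk.
    (* s + k is the convex combination of s + y and s with weight k / y *)
    pose proof (Hconv (s + y) s (k / y)) as Hc.
    replace (k / y * (s + y) + (1 - k / y) * s) with (s + k) in Hc by (field; lra).
    assert (Hw : 0 <= k / y <= 1).
    { assert (0 < / y) by (apply Rinv_0_lt_compat; lra).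
      split; [unfold Rdiv; apply Rmult_le_pos; lra|].
      replace 1 with (y / y) by (field; lra).
      unfold Rdiv; apply Rmult_le_compat_r; lra. }
    specialize (Hc Hw).
    apply (Rmult_le_reg_r k); [lra|].
    replace ((f (s + k) - f s) / k * k) with (f (s + k) - f s) by (field; lra).
    replace ((f (s + y) - f s) / y * k) with (k / y * f (s + y) - k / y * f s)
      by (field; lra).
    lra. }
  apply (Rmult_le_compat_r y) in Hq; [|lra].
  replace ((f (s + y) - f s) / y * y) with (f (s + y) - f s) in Hq by (field; lra).
  exact Hq.
Qed.

Lemma logconcave_decay (g h' : R -> R) :
  (forall x, 0 < g x) ->
  (forall a b t, 0 <= t <= 1 ->
     - ln (g (t * a + (1 - t) * b)) <= t * (- ln (g a)) + (1 - t) * (- ln (g b))) ->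
  (forall x, derivable_pt_lim (fun z => - ln (g z)) x (h' x)) ->
  forall s y M, 0 < y -> M <= h' s -> g (s + y) <= exp (- (M * y)) * g s.
Proof.
  intros g_pos g_lc h_deriv s y M Hy HM.
  pose proof (convex_above_tangent (fun z => - ln (g z)) s (h' s) y
                g_lc (h_deriv s) Hy) as Htan.
  assert (Hslope : M * y <= h' s * y) by (apply Rmult_le_compat_r; lra).
  rewrite <- (exp_ln (g (s + y))), <- (exp_ln (g s)), <- exp_plus by apply g_pos.
  destruct (Req_dec (ln (g (s + y))) (- (M * y) + ln (g s))) as [E | E];
    [rewrite E; lra | left; apply exp_increasing; lra].
Qed.

Section Cdf.

Variables g G : R -> R.
Hypothesis g_pos : forall x, 0 < g x.
Hypothesis G_deriv : forall x, derivable_pt_lim G x (g x).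
Hypothesis G_minf : lim_minfty G 0.
Hypothesis G_pinf : lim_pinfty G 1.

Lemma cdf_strict_increasing (a b : R) : a < b -> G a < G b.
Proof.
  intros Hab.
  destruct (MVT_cor2 G g a b Hab) as [c [Hc _]]; [intros; apply G_deriv|].
  assert (0 < g c * (b - a)) by (apply Rmult_lt_0_compat; [apply g_pos | lra]).
  lra.
Qed.

Lemma cdf_increasing (a b : R) : a <= b -> G a <= G b.
Proof.
  intros [H | ->]; [left; apply cdf_strict_increasing, H | lra].
Qed.

Lemma cdf_lt_1 (a : R) : G a < 1.
Proof.
  assert (Hle : forall b, G b <= 1).
  { intros b; destruct (Rle_or_lt (G b) 1) as [H | H]; [exact H|].
    destruct (G_pinf (G b - 1)) as [X HX]; [lra|].
    specialize (HX (Rmax X b) (Rmax_l _ _)); apply Rabs_def2 in HX.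
    pose proof (cdf_increasing b (Rmax X b) (Rmax_r _ _)).
    lra. }
  apply Rlt_le_trans with (G (a + 1)); [apply cdf_strict_increasing; lra | apply Hle].
Qed.

Lemma cdf_pos (a : R) : 0 < G a.
Proof.
  assert (Hge : forall b, 0 <= G b).
  { intros b; destruct (Rle_or_lt 0 (G b)) as [H | H]; [exact H|].
    destruct (G_minf (- G b)) as [X HX]; [lra|].
    specialize (HX (Rmin X b) (Rmin_l _ _)); apply Rabs_def2 in HX.
    pose proof (cdf_increasing (Rmin X b) b (Rmin_r _ _)).
    lra. }
  apply Rle_lt_trans with (G (a - 1)); [apply Hge | apply cdf_strict_increasing; lra].
Qed.

Lemma cdf_symmetric :
  (forall x, g (- x) = g x) -> forall z, G z + G (- z) = 1.
Proof.
  intros g_sym.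
  set (K := fun z => G z + G (- z)).
  assert (K_const : forall z, K z = K 0).
  { intros z0; apply (constant_of_deriv_zero K); intros z.
    replace 0 with (g z + - g (- z)) by (rewrite g_sym; ring).
    apply (derivable_pt_lim_plus G (fun t => G (- t))); [apply G_deriv|].
    apply derivable_pt_lim_reflect, G_deriv. }
  (* K 0 = lim_{z -> +oo} (G z + G (-z)) = 1 + 0 *)
  assert (K0 : K 0 = 1).
  { apply cond_eq; intros eps Heps.
    destruct (G_pinf (eps / 2)) as [X1 H1]; [lra|].
    destruct (G_minf (eps / 2)) as [X2 H2]; [lra|].
    set (z := Rmax X1 (- X2)).
    specialize (H1 z (Rmax_l _ _)).
    specialize (H2 (- z) ltac:(pose proof (Rmax_r X1 (- X2)); unfold z; lra)).
    rewrite <- (K_const z); unfold K.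
    apply Rabs_def2 in H1; apply Rabs_def2 in H2; apply Rabs_def1; lra. }
  intros z; rewrite <- K0; apply K_const.
Qed.

Lemma quantile_spec (p : R) : 0 < p < 1 -> G (quantile G p) = p.
Proof.
  intros Hp. unfold quantile. apply epsilon_spec.
  destruct (G_minf p) as [X1 H1]; [lra|].
  destruct (G_pinf (1 - p)) as [X2 H2]; [lra|].
  set (a := Rmin X1 (X2 - 1)).
  specialize (H1 a (Rmin_l _ _)); apply Rabs_def2 in H1.
  specialize (H2 X2 (Rle_refl _)); apply Rabs_def2 in H2.
  assert (a < X2) by (pose proof (Rmin_r X1 (X2 - 1)); unfold a; lra).
  assert (Hc : continuity (fun z => G z - p)).
  { intros z; apply derivable_continuous_pt; exists (g z - 0).
    apply (derivable_pt_lim_minus G (fct_cte p));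
      [apply G_deriv | apply derivable_pt_lim_const]. }
  destruct (IVT _ a X2 Hc H ltac:(lra) ltac:(lra)) as [z [_ Hz]].
  exists z; lra.
Qed.

Lemma tail_comparison (y c T : R) :
  0 <= y -> 0 <= c -> (forall s, T <= s -> g (s + y) <= c * g s) ->
  forall t, T <= t -> 1 - G (t + y) <= c * (1 - G t).
Proof.
  intros Hy Hc Hdens.
  set (F := fun t => (1 - G (t + y)) - c * (1 - G t)).
  assert (F_deriv : forall t, derivable_pt_lim F t (- g (t + y) + c * g t)).
  { intros t.
    replace (- g (t + y) + c * g t) with ((0 - g (t + y)) - c * (0 - g t)) by ring.
    apply (derivable_pt_lim_minus (fun t => 1 - G (t + y)) (fun t => c * (1 - G t))).
    - apply (derivable_pt_lim_minus (fct_cte 1) (fun t => G (t + y)));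
        [apply derivable_pt_lim_const | apply derivable_pt_lim_shift, G_deriv].
    - apply (derivable_pt_lim_scal (fun t => 1 - G t)).
      apply (derivable_pt_lim_minus (fct_cte 1) G);
        [apply derivable_pt_lim_const | apply G_deriv]. }
  (* F t <= 1 - G (t + y) -> 0, and F is nondecreasing on [T, +oo) *)
  assert (F_small : forall eps, 0 < eps -> exists X, forall t, X <= t -> F t < eps).
  { intros eps Heps; destruct (G_pinf eps Heps) as [X HX]; exists X.
    intros t Ht; specialize (HX (t + y) ltac:(lra)); apply Rabs_def2 in HX.
    assert (0 <= c * (1 - G t)) by (apply Rmult_le_pos; [|pose proof (cdf_lt_1 t)]; lra).
    unfold F; lra. }
  assert (F_mono : forall a b, T <= a -> a <= b -> F a <= F b).
  { apply (nondecreasing_of_deriv_nonneg F _ T F_deriv).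
    intros s Hs; pose proof (Hdens s Hs); lra. }
  intros t Ht.
  pose proof (nondecreasing_eventually_small_nonpos F T F_mono F_small t Ht).
  unfold F in *; lra.
Qed.

End Cdf.

Lemma posterior_tail_vanishes (g G h' : R -> R) :
  (forall x, 0 < g x) ->
  (forall x, derivable_pt_lim G x (g x)) -> lim_pinfty G 1 ->
  (forall a b t, 0 <= t <= 1 ->
     - ln (g (t * a + (1 - t) * b)) <= t * (- ln (g a)) + (1 - t) * (- ln (g b))) ->
  (forall x, derivable_pt_lim (fun z => - ln (g z)) x (h' x)) ->
  tends_pinfty h' ->
  forall y, 0 < y -> lim_minfty (fun x => (1 - G (y - x)) / (1 - G (- x))) 0.
Proof.
  intros g_pos G_deriv G_pinf g_lc h_deriv h'_inf y Hy eps Heps.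
  (* choose the slope M so that exp (- M y) = eps / 2 *)
  set (M := - ln (eps / 2) / y).
  destruct (h'_inf M) as [X HX].
  assert (Hdens : forall s, X <= s -> g (s + y) <= eps / 2 * g s).
  { intros s Hs.
    replace (eps / 2) with (exp (- (M * y)))
      by (unfold M; replace (- (- ln (eps / 2) / y * y)) with (ln (eps / 2))
            by (field; lra); apply exp_ln; lra).
    exact (logconcave_decay g h' g_pos g_lc h_deriv s y M Hy (HX s Hs)). }
  exists (- X); intros x Hx.
  pose proof (tail_comparison g G g_pos G_deriv G_pinf y (eps / 2) X
                ltac:(lra) ltac:(lra) Hdens (- x) ltac:(lra)) as Htail.
  pose proof (cdf_lt_1 g G g_pos G_deriv G_pinf (- x)).
  pose proof (cdf_lt_1 g G g_pos G_deriv G_pinf (y - x)).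
  replace (- x + y) with (y - x) in Htail by ring.
  rewrite Rminus_0_r, Rabs_pos_eq by (left; apply Rdiv_lt_0_compat; lra).
  apply Rle_lt_trans with (eps / 2); [|lra].
  apply (Rmult_le_reg_r (1 - G (- x))); [lra|].
  replace ((1 - G (y - x)) / (1 - G (- x)) * (1 - G (- x))) with (1 - G (y - x))
    by (field; lra).
  exact Htail.
Qed.

Lemma hpd_lower_branch_small (g G : R -> R) (alpha x eps : R) :
  (forall x, 0 < g x) ->
  (forall x, derivable_pt_lim G x (g x)) -> lim_minfty G 0 -> lim_pinfty G 1 ->
  0 < alpha < 1 -> G (x - eps) < alpha * G x ->
  0 < x - quantile G (alpha * G x) < eps.
Proof.
  intros g_pos G_deriv G_minf G_pinf Halpha Hsmall.
  pose proof (cdf_pos g G g_pos G_deriv G_minf x).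
  pose proof (cdf_lt_1 g G g_pos G_deriv G_pinf x).
  assert (Hlt : alpha * G x < G x)
    by (rewrite <- (Rmult_1_l (G x)) at 2; apply Rmult_lt_compat_r; lra).
  assert (Hq : G (quantile G (alpha * G x)) = alpha * G x).
  { apply (quantile_spec g G G_deriv G_minf G_pinf).
    split; [apply Rmult_lt_0_compat|]; lra. }
  set (q := quantile G (alpha * G x)) in *.
  split.
  - destruct (Rlt_or_le q x) as [L | L]; [lra|].
    pose proof (cdf_increasing g G g_pos G_deriv x q L); lra.
  - destruct (Rlt_or_le (x - eps) q) as [L | L]; [lra|].
    pose proof (cdf_increasing g G g_pos G_deriv q (x - eps) L); lra.
Qed.

Theorem mainTheorem15
  (g G h' : R -> R)
  (* g positive on R *)
  (g_pos : forall x, 0 < g x)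
  (* G is the cdf of g: G' = g, G(-oo) = 0, G(+oo) = 1 (so g is a probability density) *)
  (G_deriv : forall x, derivable_pt_lim G x (g x))
  (G_minf : lim_minfty G 0)
  (G_pinf : lim_pinfty G 1)
  (* symmetric about 0 *)
  (g_sym : forall x, g (- x) = g x)
  (* unimodal (mode 0) *)
  (g_unimodal : forall x y, 0 <= x -> x <= y -> g y <= g x)
  (* logconcave: h = - ln g convex *)
  (g_logconcave : forall x y t, 0 <= t <= 1 ->
     - ln (g (t * x + (1 - t) * y)) <= t * (- ln (g x)) + (1 - t) * (- ln (g y)))
  (* h' is the derivative of h = - ln g *)
  (h_deriv : forall x, derivable_pt_lim (fun z => - ln (g z)) x (h' x))
  (* h' unbounded: h'(x) -> +oo as x -> +oo *)
  (h'_unbounded : tends_pinfty h') :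
  (forall y, 0 < y ->
     lim_minfty (fun x => (1 - G (y - x)) / (1 - G (- x))) 0) /\
  (forall alpha, 0 < alpha < 1 -> lim_minfty (fun x => hpd_upper G alpha x) 0).
Proof.
  pose proof (posterior_tail_vanishes g G h' g_pos G_deriv G_pinf
                g_logconcave h_deriv h'_unbounded) as Hratio.
  split; [exact Hratio|].
  intros alpha Halpha eps Heps.
  destruct (Hratio eps Heps alpha ltac:(lra)) as [X HX].
  set (d0 := quantile G (1 / (1 + alpha))).
  exists (Rmin X d0); intros x Hx.
  pose proof (Rmin_l X d0); pose proof (Rmin_r X d0).
  unfold hpd_upper; fold d0.
  destruct (Rle_dec x d0) as [_ | C]; [|lra].
  (* by symmetry the posterior ratio is G (x - eps) / G x *)
  specialize (HX x ltac:(lra)).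
  pose proof (cdf_symmetric g G G_deriv G_minf G_pinf g_sym x).
  pose proof (cdf_symmetric g G G_deriv G_minf G_pinf g_sym (x - eps)).
  replace (- (x - eps)) with (eps - x) in * by ring.
  pose proof (cdf_pos g G g_pos G_deriv G_minf x).
  assert (Hsmall : G (x - eps) < alpha * G x).
  { replace (1 - G (eps - x)) with (G (x - eps)) in HX by lra.
    replace (1 - G (- x)) with (G x) in HX by lra.
    rewrite Rminus_0_r in HX; apply Rabs_def2 in HX as [Hlt _].
    apply (Rmult_lt_compat_r (G x)) in Hlt; [|lra].
    replace (G (x - eps) / G x * G x) with (G (x - eps)) in Hlt by (field; lra).
    lra. }
  pose proof (hpd_lower_branch_small g G alpha x eps g_pos G_deriv G_minf G_pinf
                Halpha Hsmall).
  rewrite Rminus_0_r, Rabs_pos_eq; lra.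
Qed.
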